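(* Consider the approximate first-stage problem described in the context. If it has an optimal solution, then there always exists an optimal solution in which, for every $(i,t)$, the pair $(y_i^{+,t},y_i^{-,t})$ has the form $(y_i^{+,t},0)$ or $(0,y_i^{-,t})$.
   Context: Data: a directed graph $\mathcal{G}_\text{RV}=(\mathcal{N}_\text{RV},\mathcal{E}_\text{RV})$ of one-step rebalancing-vehicle (RV) movements, a set $\mathcal{N}_\text{SV}$ of stations, a finite set $\mathcal{V}$ of RVs each with integer capacity $\overline{b}$, horizon $T$, integer bound $\overline{y}$, costs $c_{i,j}^t\in\mathbb{R}$, $r_i^t\ge0$. A parameter vector $\theta=(\theta_0,(\theta_i^t)_{i,t})$ with $\theta_0\in\mathbb{R}$ and $\theta_i^t=([\theta_i^t]_{-\overline{y}},\dots,[\theta_i^t]_{\overline{y}-1})\in\mathbb{R}^{2\overline{y}}$ defines $\overline{V}_i^t(\cdot;\theta_i^t):[-\overline{y},\overline{y}]\to\mathbb{R}$ as the continuous piecewise linear function with $\overline{V}_i^t(0)=0$ whose slope on $[m,m+1]$ is $[\theta_i^t]_m$ for $m=-\overline{y},\dots,\overline{y}-1$, and $\overline{V}(y;\theta)=\theta_0+\sum_{t=1}^T\sum_{i\in\mathcal{N}_\text{SV}\cap\mathcal{N}_\text{RV}}\overline{V}_i^t(y_i^{-,t}-y_i^{+,t};\theta_i^t)$. The approximate first-stage problem is $$\min_{z,y,b}\ \sum_{t=1}^T\Big[\sum_{(i,j)\in\mathcal{E}_\text{RV}}c_{i,j}^tz_{i,j}^t+\sum_{i\in\mathcal{N}_\text{SV}\cap\mathcal{N}_\text{RV}}r_i^t(y_i^{+,t}+y_i^{-,t})\Big]+\overline{V}(y;\theta)$$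 subject to: $\sum_{(i,j)\in\mathcal{E}_\text{RV}}b_{i,j}^t=\sum_{(j,i)\in\mathcal{E}_\text{RV}}b_{j,i}^{t-1}+y_i^{+,t}-y_i^{-,t}$ and $\sum_{(i,j)\in\mathcal{E}_\text{RV}}z_{i,j}^t=\sum_{(j,i)\in\mathcal{E}_\text{RV}}z_{j,i}^{t-1}$ for $t=1,\dots,T$, $i\in\mathcal{N}_\text{RV}$; $0\le b_{i,j}^t\le\overline{b}z_{i,j}^t$ for $t=0,\dots,T$ with integers $b_{i,j}^0$ given; $0\le y_i^{+,t}\le\overline{y}$, $0\le y_i^{-,t}\le\overline{y}$; integers $z_{i,j}^0$ given with $\sum_{i,j}z_{i,j}^0=|\mathcal{V}|$; all $y,b,z$ integer-valued. (Variables $y_i^{\pm,t}$ are taken to be $0$ where not defined.) *)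

From HB Require Import structures.
From mathcomp Require Import all_boot all_order all_algebra.
Set Implicit Arguments. Unset Strict Implicit. Unset Printing Implicit Defensive.
Import Order.TTheory GRing.Theory Num.Theory.
Local Open Scope ring_scope.

(* Decision variables of the approximate first-stage problem.
   zv t i j = z_{i,j}^t, bv t i j = b_{i,j}^t, yp t i = y_i^{+,t}, ym t i = y_i^{-,t}.
   Only entries for edges (i,j) of E (resp. t in the relevant ranges) matter. *)
Record fs_sol (N : finType) := FsSol {
  zv : nat -> N -> N -> int;
  bv : nat -> N -> N -> int;
  yp : nat -> N -> int;
  ym : nat -> N -> int }.

(* Vbar_i^t evaluated at an integer point y: the continuous piecewise linear
   function with value 0 at 0 and slope th m on [m, m+1]. *)
Definition Vbar_pl (R : numDomainType) (th : int -> R) (y : int) : R :=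
  if (0 <= y)%R then \sum_(0 <= k < `|y|%N) th (k%:Z)
  else - \sum_(0 <= k < `|y|%N) th (- (k.+1)%:Z).

Section FirstStage.
Variables (R : realFieldType) (N : finType) (E : rel N) (S : {set N})
  (nV bbar T ybar : nat)
  (z0 b0 : N -> N -> int)
  (c : nat -> N -> N -> R) (r : nat -> N -> R)
  (th0 : R) (th : nat -> N -> int -> R).

(* Feasible set. N = N_RV, S = N_SV \cap N_RV, E = edge relation of G_RV. *)
Definition fs_feasible (s : fs_sol N) : Prop :=
  (forall t i, (1 <= t <= T)%N ->
     \sum_(j | E i j) bv s t i j
       = \sum_(j | E j i) bv s t.-1 j i + yp s t i - ym s t i) /\
  (forall t i, (1 <= t <= T)%N ->
     \sum_(j | E i j) zv s t i j = \sum_(j | E j i) zv s t.-1 j i) /\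
  (forall t i j, (t <= T)%N -> E i j ->
     0 <= bv s t i j <= (bbar%:Z) * zv s t i j) /\
  (forall i j, E i j -> bv s 0 i j = b0 i j) /\
  (forall i j, E i j -> zv s 0 i j = z0 i j) /\
  (forall t i, (1 <= t <= T)%N -> i \in S ->
     0 <= yp s t i <= ybar%:Z /\ 0 <= ym s t i <= ybar%:Z) /\
  (* y is 0 where not defined (nodes of N_RV that are not stations) *)
  (forall t i, (1 <= t <= T)%N -> i \notin S -> yp s t i = 0 /\ ym s t i = 0).

Definition fs_obj (s : fs_sol N) : R :=
  \sum_(1 <= t < T.+1)
     ( \sum_(i : N) \sum_(j | E i j) c t i j * (zv s t i j)%:~R
     + \sum_(i in S) r t i * (yp s t i + ym s t i)%:~R )
  + (th0 + \sum_(1 <= t < T.+1) \sum_(i in S)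
             Vbar_pl (th t i) (ym s t i - yp s t i)).

Definition fs_optimal (s : fs_sol N) : Prop :=
  fs_feasible s /\ forall s', fs_feasible s' -> fs_obj s <= fs_obj s'.
End FirstStage.

From HB Require Import structures.
From mathcomp Require Import all_boot all_order all_algebra.
Set Implicit Arguments. Unset Strict Implicit. Unset Printing Implicit Defensive.
Import Order.TTheory GRing.Theory Num.Theory.
Local Open Scope ring_scope.

(* Subtracting m = min(y+, y-) from both the pickup y+ and the dropoff y- at
   every (t, i) keeps the net transfer y+ - y-, through which alone the load
   balance and the value function approximation see y, keeps the bounds
   [0, ybar], and lowers the handling cost r (y+ + y-) by 2 r m >= 0.  So the
   netted solution is still optimal, and one of its two transfers vanishes. *)

Section SubtractMin.
Variable R : realDomainType.
Implicit Types x y u : R.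

Lemma subr_min_eq0 x y : x - Num.min x y = 0 \/ y - Num.min x y = 0.
Proof. by case: lerP => _; [left | right]; rewrite subrr. Qed.

Lemma subr_min_ge0 x y : 0 <= x - Num.min x y.
Proof. by rewrite subr_ge0 ge_min lexx. Qed.

Lemma subr_min_le x y : 0 <= x -> 0 <= y -> x - Num.min x y <= x.
Proof. by move=> x_ge0 y_ge0; rewrite gerBl le_min x_ge0. Qed.

Lemma subr_min_itv x y u :
  0 <= x <= u -> 0 <= y -> 0 <= x - Num.min x y <= u.
Proof.
move=> /andP[x_ge0 x_le] y_ge0.
by rewrite subr_min_ge0 (le_trans (subr_min_le x_ge0 y_ge0)).
Qed.

End SubtractMin.

Section Netting.
Variables (R : realFieldType) (N : finType) (E : rel N) (S : {set N})
  (bbar T ybar : nat) (z0 b0 : N -> N -> int)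
  (c : nat -> N -> N -> R) (r : nat -> N -> R)
  (th0 : R) (th : nat -> N -> int -> R).

Definition netted (s : fs_sol N) : fs_sol N :=
  FsSol (zv s) (bv s)
    (fun t i => yp s t i - Num.min (yp s t i) (ym s t i))
    (fun t i => ym s t i - Num.min (yp s t i) (ym s t i)).

Lemma netted_net_transfer s t i :
  yp (netted s) t i - ym (netted s) t i = yp s t i - ym s t i.
Proof. by rewrite /= opprB subrKA. Qed.

Lemma netted_complementary s t i :
  yp (netted s) t i = 0 \/ ym (netted s) t i = 0.
Proof. exact: subr_min_eq0. Qed.

Lemma netted_feasible s :
  fs_feasible E S bbar T ybar z0 b0 s -> fs_feasible E S bbar T ybar z0 b0 (netted s).
Proof.
case=> [balb [balz [cap [b_init [z_init [ybound yzero]]]]]].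
split=> [t i ht|]; first by rewrite -addrA netted_net_transfer addrA; exact: balb.
do 4![split=> //].
split=> [t i ht iS | t i ht iS].
  have [yp_itv ym_itv] := ybound t i ht iS.
  split; first exact: subr_min_itv yp_itv (andP ym_itv).1.
  by rewrite /= minC; exact: subr_min_itv ym_itv (andP yp_itv).1.
by have [yp0 ym0] := yzero t i ht iS; rewrite /= yp0 ym0 minxx subrr.
Qed.

Lemma netted_obj_le s :
  (forall t i, 0 <= r t i) -> fs_feasible E S bbar T ybar z0 b0 s ->
  fs_obj E S T c r th0 th (netted s) <= fs_obj E S T c r th0 th s.
Proof.
move=> r_ge0 [_ [_ [_ [_ [_ [ybound _]]]]]].
have Vbar_eq t i : ym (netted s) t i - yp (netted s) t i = ym s t i - yp s t i.
  by rewrite -opprB netted_net_transfer opprB.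
rewrite /fs_obj; apply: lerD; last by under eq_big_nat do under eq_bigr do rewrite Vbar_eq.
apply: ler_sum_nat => t ht; rewrite lerD2l; apply: ler_sum => i iS.
rewrite ler_wpM2l // ler_int.
have [/andP[yp_ge0 _] /andP[ym_ge0 _]] := ybound t i ht iS.
by rewrite /= lerD // ?subr_min_le // minC subr_min_le.
Qed.

Lemma netted_optimal s :
  (forall t i, 0 <= r t i) ->
  fs_optimal E S bbar T ybar z0 b0 c r th0 th s ->
  fs_optimal E S bbar T ybar z0 b0 c r th0 th (netted s).
Proof.
move=> r_ge0 [feas opt]; split; first exact: netted_feasible.
by move=> s' feas'; exact: le_trans (netted_obj_le r_ge0 feas) (opt s' feas').
Qed.

End Netting.

Theorem lemma3 (R : realFieldType) (N : finType) (E : rel N) (S : {set N})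
  (nV bbar T ybar : nat) (z0 b0 : N -> N -> int)
  (c : nat -> N -> N -> R) (r : nat -> N -> R) (th0 : R)
  (th : nat -> N -> int -> R)
  (hz0 : \sum_(i : N) \sum_(j | E i j) z0 i j = nV%:Z)
  (hr : forall t i, 0 <= r t i) :
  (exists s, fs_optimal E S bbar T ybar z0 b0 c r th0 th s) ->
  exists s, fs_optimal E S bbar T ybar z0 b0 c r th0 th s /\
    forall t i, (1 <= t <= T)%N -> i \in S -> yp s t i = 0 \/ ym s t i = 0.
Proof.
case=> s opt_s; exists (netted s); split; first exact: netted_optimal.
by move=> t i _ _; exact: netted_complementary.
Qed.
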